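(* Let $\mathcal{P}=\langle P,\le\rangle$ be a finite bounded poset with $|P|\ge 2$. Then there exists $n\in\mathbb{N}$ such that $(R^+)^n(\mathcal{P})$ is a chain.
   Context: A poset is bounded if it has a least and a greatest element. The height $H$ of a finite poset is the number of elements in its largest chain. For $a\in P$, $\uparrow a=\{b:b\ge a\}$, $\downarrow a=\{b:b\le a\}$ as subposets; the standard interval rank is $R^+(a)=[H(\uparrow a)-1,\;H(\mathcal{P})-H(\downarrow a)]$. Weak order: $[x_*,x^*]\le_W[y_*,y^*]$ iff $x_*\le y_*$ and $x^*\le y^*$. The interval rank poset $R^+(\mathcal{P})$ is the set $\{R^+(a):a\in P\}$ ordered by $\ge_W$ (it is again a finite bounded poset); $(R^+)^n$ denotes the $n$-fold iteration of this construction. *)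

From mathcomp Require Import all_boot.
Set Implicit Arguments. Unset Strict Implicit. Unset Printing Implicit Defensive.

Record finPoset := FinPoset {
  carrier :> finType;
  ple : rel carrier;
  ple_refl : reflexive ple;
  ple_anti : antisymmetric ple;
  ple_trans : transitive ple }.

Section Defs.
Variable P : finPoset.

Definition is_chain_set (C : {set P}) : bool :=
  [forall x in C, forall y in C, ple x y || ple y x].

Definition height (A : {set P}) : nat :=
  \max_(C : {set P} | (C \subset A) && is_chain_set C) #|C|.

Definition up (a : P) : {set P} := [set b | ple a b].
Definition down (a : P) : {set P} := [set b | ple b a].

(* Standard interval rank R^+(a) = [H(up a) - 1, H(P) - H(down a)]. *)
Definition rank_plus (a : P) : nat * nat :=
  ((height (up a)).-1, height [set: P] - height (down a)).

Definition bounded : Prop :=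
  (exists bot : P, forall x : P, ple bot x) /\ (exists top : P, forall x : P, ple x top).

Definition is_chain : Prop := forall x y : P, ple x y || ple y x.

Definition RP_carrier : finType :=
  seq_sub (undup [seq rank_plus a | a <- enum P]).

(* Ordered by >=_W (reverse of the weak order). *)
Definition RP_le : rel RP_carrier :=
  fun x y => ((ssval y).1 <= (ssval x).1) && ((ssval y).2 <= (ssval x).2).

Lemma RP_le_refl : reflexive RP_le.
Proof. by move=> x; rewrite /RP_le !leqnn. Qed.

Lemma RP_le_anti : antisymmetric RP_le.
Proof.
move=> x y /andP[/andP[h1 h2] /andP[h3 h4]].
apply: val_inj; rewrite /= [ssval x]surjective_pairing [ssval y]surjective_pairing.
by apply/eqP; rewrite xpair_eqE !eqn_leq h1 h2 h3 h4.
Qed.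

Lemma RP_le_trans : transitive RP_le.
Proof.
move=> y x z /andP[h1 h2] /andP[h3 h4]; apply/andP; split.
  exact: leq_trans h3 h1.
exact: leq_trans h4 h2.
Qed.

End Defs.

Definition Rplus (P : finPoset) : finPoset :=
  @FinPoset (RP_carrier P) (@RP_le P) (@RP_le_refl P) (@RP_le_anti P) (@RP_le_trans P).

Definition Rplus_iter (n : nat) (P : finPoset) : finPoset := iter n Rplus P.

From mathcomp Require Import all_boot.
From mathcomp Require Import zify.
Set Implicit Arguments. Unset Strict Implicit. Unset Printing Implicit Defensive.

(* The map a |-> R^+(a) is order-preserving and onto R^+(P), so every
   incomparable pair of R^+(P) lifts to an incomparable pair of P. It moreover
   collapses at least one incomparable pair of P: fix a maximum chain C and,
   among the elements c of C incomparable to some a, take one with minimal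
   down-set. Then the part of C strictly below c, together with a, is a chain
   below a, whence H(down c) <= H(down a); and since C passes through c,
   H(up c) + H(down c) = H(P) + 1. Together with H(up a) - 1 <= H(P) - H(down a)
   this gives R^+(a) <=_W R^+(c). So the number of incomparable pairs strictly
   decreases along the iteration, and reaches zero. *)

Definition incomparables (Q : finPoset) : {set Q * Q} :=
  [set p : Q * Q | ~~ ple p.1 p.2 && ~~ ple p.2 p.1].

Lemma is_chain_incomparables0 (Q : finPoset) :
  #|incomparables Q| = 0 -> is_chain Q.
Proof.
move/eqP; rewrite cards_eq0 => /eqP inc0 x y.
apply/negPn/negP => nxy.
have : (x, y) \in incomparables Q by rewrite inE /= -negb_or.
by rewrite inc0 inE.
Qed.

Section Height.
Variable P : finPoset.

Lemma in_up (a b : P) : (b \in up a) = ple a b.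
Proof. by rewrite inE. Qed.

Lemma in_down (a b : P) : (b \in down a) = ple b a.
Proof. by rewrite inE. Qed.

Lemma is_chain_setP (C : {set P}) :
  reflect {in C &, forall x y, ple x y || ple y x} (is_chain_set C).
Proof.
apply: (iffP forallP) => [chC x y xC yC | chC x].
  by move: (chC x); rewrite xC => /forallP/(_ y); rewrite yC.
by apply/implyP => xC; apply/forallP => y; apply/implyP; apply: chC.
Qed.

Lemma is_chain_setS (C D : {set P}) :
  D \subset C -> is_chain_set C -> is_chain_set D.
Proof.
move=> sDC /is_chain_setP chC; apply/is_chain_setP => x y xD yD.
by apply: chC; apply: (subsetP sDC).
Qed.

Lemma leq_card_height (A C : {set P}) :
  C \subset A -> is_chain_set C -> #|C| <= height A.
Proof.
move=> sCA chC.
apply: (@leq_bigmax_cond _ (fun C : {set P} => (C \subset A) && is_chain_set C)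
  (fun C => #|C|)).
by rewrite sCA chC.
Qed.

Lemma height_witness (A : {set P}) :
  exists2 C : {set P}, (C \subset A) && is_chain_set C & #|C| = height A.
Proof.
pose chain_in := fun C : {set P} => (C \subset A) && is_chain_set C.
have : 0 < #|chain_in|.
  apply/card_gt0P; exists set0; rewrite unfold_in /chain_in sub0set.
  by apply/is_chain_setP => x y; rewrite inE.
case/(eq_bigmax_cond (fun C : {set P} => #|C|)) => C chainC eC.
by exists C; [move: chainC; rewrite unfold_in | rewrite /height eC].
Qed.

Lemma height_subset (A B : {set P}) : A \subset B -> height A <= height B.
Proof.
move=> sAB; apply/bigmax_leqP => C /andP[sCA chC].
by apply: leq_card_height (subset_trans sCA sAB) chC.
Qed.

(* A chain above a and a chain below a glue into a chain sharing at most a. *)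
Lemma card_chains_up_down (a : P) (K1 K2 : {set P}) :
  K1 \subset up a -> K2 \subset down a -> is_chain_set K1 -> is_chain_set K2 ->
  #|K1| + #|K2| <= (height [set: P]).+1.
Proof.
move=> /subsetP s1 /subsetP s2 ch1 ch2.
have above x : x \in K1 -> ple a x by move/s1; rewrite in_up.
have below x : x \in K2 -> ple x a by move/s2; rewrite in_down.
have chU : is_chain_set (K1 :|: K2).
  apply/is_chain_setP => x y; rewrite !inE => /orP[xK|xK] /orP[yK|yK].
  - exact: (is_chain_setP _ ch1).
  - by rewrite (ple_trans (below y yK) (above x xK)) orbT.
  - by rewrite (ple_trans (below x xK) (above y yK)).
  - exact: (is_chain_setP _ ch2).
have cardI : #|K1 :&: K2| <= 1.
  rewrite -(cards1 a); apply/subset_leq_card/subsetP => x.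
  rewrite !inE => /andP[/above ax /below xa].
  by apply/eqP/ple_anti; rewrite ax xa.
have := leq_card_height (subsetT (K1 :|: K2)) chU.
have := cardsUI K1 K2; lia.
Qed.

Lemma rank_plus_interval (a : P) :
  (height (up a)).-1 <= height [set: P] - height (down a).
Proof.
have [K1 /andP[s1 ch1] <-] := height_witness (up a).
have [K2 /andP[s2 ch2] <-] := height_witness (down a).
have := card_chains_up_down s1 s2 ch1 ch2; lia.
Qed.

Lemma minimal_incomparable (C : {set P}) (a c0 : P) :
  c0 \in C -> ~~ ple a c0 -> ~~ ple c0 a ->
  exists c, [/\ c \in C, ~~ ple a c, ~~ ple c a &
    {in C, forall x, ple x c -> x != c -> ple x a || ple a x}].
Proof.
move=> c0C ac0 c0a.
pose inc_a := fun c => [&& c \in C, ~~ ple a c & ~~ ple c a].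
have [|c /and3P[cC ac ca] minc] := arg_minnP (fun c => #|down c|) (_ : inc_a c0).
  by rewrite /inc_a c0C ac0 c0a.
exists c; split=> // x xC xc xnc; apply/negPn/negP; rewrite negb_or => /andP[xa ax].
have : down x \proper down c.
  rewrite properE; apply/andP; split.
    by apply/subsetP => z; rewrite !in_down => zx; apply: ple_trans xc.
  apply/subsetPn; exists c; first by rewrite in_down ple_refl.
  by rewrite in_down; apply: contra xnc => cx; apply/eqP/ple_anti; rewrite xc cx.
by move/proper_card; rewrite ltnNge minc // /inc_a xC xa ax.
Qed.

Section MaximumChain.
Variable C : {set P}.
Hypothesis chainC : is_chain_set C.
Hypothesis maxC : #|C| = height [set: P].

Lemma max_chain_absorbs (z : P) :
  {in C, forall c, ple z c || ple c z} -> z \in C.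
Proof.
move=> cmp; apply/negPn/negP => zC.
have chzC : is_chain_set (z |: C).
  apply/is_chain_setP => u v; rewrite !inE => /orP[/eqP->|uC] /orP[/eqP->|vC].
  - by rewrite ple_refl.
  - exact: cmp.
  - by rewrite orbC; apply: cmp.
  - exact: (is_chain_setP _ chainC).
by have := leq_card_height (subsetT _) chzC; rewrite cardsU1 zC maxC; lia.
Qed.

Lemma incomparable_to_max_chain (x y : P) : ~~ ple x y -> ~~ ple y x ->
  exists a c, [/\ c \in C, ~~ ple a c & ~~ ple c a].
Proof.
move=> nxy nyx.
case: (boolP [exists a, exists c, [&& c \in C, ~~ ple a c & ~~ ple c a]]).
  by case/existsP=> a /existsP[c /and3P[]]; exists a, c.
rewrite negb_exists => /forallP none.
have inC z : z \in C.
  apply: max_chain_absorbs => c cC.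
  by move: (none z); rewrite negb_exists => /forallP/(_ c); rewrite cC /= negb_and !negbK.
by have := is_chain_setP _ chainC x y (inC x) (inC y); rewrite (negbTE nxy) (negbTE nyx).
Qed.

Lemma height_up_down_max_chain (c : P) :
  c \in C -> (height [set: P]).+1 <= height (up c) + height (down c).
Proof.
move=> cC.
have splitC : (C :&: up c) :|: (C :&: down c) = C.
  apply/setP => x; rewrite !inE.
  by case xC: (x \in C); rewrite //= (is_chain_setP _ chainC).
have meetC : (C :&: up c) :&: (C :&: down c) = [set c].
  apply/setP => x; rewrite !inE; apply/idP/idP.
    by case/andP=> /andP[_ cx] /andP[_ xc]; apply/eqP/ple_anti; rewrite xc cx.
  by move/eqP->; rewrite cC ple_refl.
have := cardsUI (C :&: up c) (C :&: down c); rewrite splitC meetC cards1 maxC.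
have := leq_card_height (subsetIr C (up c)) (is_chain_setS (subsetIl _ _) chainC).
have := leq_card_height (subsetIr C (down c)) (is_chain_setS (subsetIl _ _) chainC).
lia.
Qed.

Lemma height_down_minimal_incomparable (a c : P) :
  c \in C -> ~~ ple a c -> ~~ ple c a ->
  {in C, forall x, ple x c -> x != c -> ple x a || ple a x} ->
  height (down c) <= height (down a).
Proof.
move=> cC ac ca minc.
set B := C :\: up c.
have sBa : B \subset down a.
  apply/subsetP => x; rewrite !inE => /andP[ncx xC].
  have xc : ple x c by move: (is_chain_setP _ chainC x c xC cC); rewrite (negbTE ncx) orbF.
  have xnc : x != c by apply: contraNneq ncx => ->; apply: ple_refl.
  case/orP: (minc x xC xc xnc) => // ax.
  by rewrite (ple_trans ax xc) in ac.
have chaB : is_chain_set (a |: B).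
  apply/is_chain_setP => x y; rewrite !in_setU1.
  case/orP=> [/eqP->|xB] /orP[/eqP->|yB].
  - by rewrite ple_refl.
  - by move: (subsetP sBa y yB); rewrite in_down => ->; rewrite orbT.
  - by move: (subsetP sBa x xB); rewrite in_down => ->.
  - by apply: (is_chain_setP _ chainC); [move: xB | move: yB]; rewrite !inE => /andP[].
have aB : a \notin B.
  rewrite inE; apply/negP => /andP[_ aC].
  by have := is_chain_setP _ chainC a c aC cC; rewrite (negbTE ac) (negbTE ca).
have saBa : a |: B \subset down a by rewrite subUset sub1set in_down ple_refl sBa.
have := leq_card_height saBa chaB; rewrite cardsU1 aB.
have [K /andP[sK chK] <-] := height_witness (down c).
have := card_chains_up_down (subsetIr C (up c)) sK (is_chain_setS (subsetIl _ _) chainC) chK.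
have := cardsID (up c) C; rewrite -/B maxC; lia.
Qed.

End MaximumChain.
End Height.

Section IntervalRank.
Variable P : finPoset.

Lemma mem_rank_plus (a : P) : rank_plus a \in undup [seq rank_plus b | b <- enum P].
Proof. by rewrite mem_undup map_f // mem_enum. Qed.

Definition rank_elt (a : P) : Rplus P := SeqSub (mem_rank_plus a).

Lemma rank_elt_surj (x : Rplus P) : exists a, rank_elt a = x.
Proof.
have := ssvalP x; rewrite mem_undup => /mapP[a _ xa].
by exists a; apply: val_inj; rewrite /= xa.
Qed.

Lemma rank_elt_mono (a b : P) : ple a b -> ple (rank_elt a) (rank_elt b).
Proof.
move=> ab; rewrite /= /RP_le /= /rank_plus /=.
have upba : height (up b) <= height (up a).
  by apply/height_subset/subsetP => x; rewrite !in_up; apply: ple_trans.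
have downab : height (down a) <= height (down b).
  by apply/height_subset/subsetP => x; rewrite !in_down => xa; apply: ple_trans ab.
apply/andP; split; lia.
Qed.

Lemma rank_elt_collapses : 0 < #|incomparables P| ->
  exists a c, (a, c) \in incomparables P /\ ple (rank_elt c) (rank_elt a).
Proof.
case/card_gt0P => -[x y]; rewrite inE /= => /andP[nxy nyx].
have [C /andP[_ chainC] maxC] := height_witness [set: P].
have [a [c0 [c0C ac0 c0a]]] := incomparable_to_max_chain chainC maxC nxy nyx.
have [c [cC ac ca minc]] := minimal_incomparable c0C ac0 c0a.
exists a, c; split; first by rewrite inE /= ac ca.
have := height_down_minimal_incomparable chainC maxC cC ac ca minc.
have := height_up_down_max_chain chainC maxC cC.
have := rank_plus_interval a.
rewrite /= /RP_le /= /rank_plus /= => *; apply/andP; split; lia.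
Qed.

Lemma card_incomparables_Rplus : 0 < #|incomparables P| ->
  #|incomparables (Rplus P)| < #|incomparables P|.
Proof.
case/rank_elt_collapses => a [c [inc_ac rca]].
pose F := fun p : P * P => (rank_elt p.1, rank_elt p.2).
have lift_pairs : incomparables (Rplus P) \subset F @: (incomparables P :\ (a, c)).
  apply/subsetP => -[x y].
  have [a' <-] := rank_elt_surj x; have [b' <-] := rank_elt_surj y.
  rewrite inE /= => /andP[nxy nyx].
  apply/imsetP; exists (a', b') => //.
  rewrite !inE /= (contra (@rank_elt_mono a' b') nxy) (contra (@rank_elt_mono b' a') nyx).
  apply/andP; split=> //; apply: contraNneq nyx => -[-> ->]; exact: rca.
have := subset_leq_card lift_pairs.
have := leq_imset_card F (incomparables P :\ (a, c)).
have := cardsD1 (a, c) (incomparables P); rewrite inc_ac add1n => -> imF sub.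
by rewrite ltnS; apply: leq_trans sub imF.
Qed.

End IntervalRank.

Lemma Rplus_iter_chain (P : finPoset) : exists n, is_chain (Rplus_iter n P).
Proof.
have [k incP] : exists k, #|incomparables P| <= k by exists #|incomparables P|.
elim: k P incP => [|k IHk] P incP.
  by exists 0; apply/is_chain_incomparables0/eqP; rewrite -leqn0.
have [inc0 | inc_pos] := posnP #|incomparables P|.
  by exists 0; apply: is_chain_incomparables0.
have [n chn] : exists n, is_chain (Rplus_iter n (Rplus P)).
  by apply: IHk; have := card_incomparables_Rplus inc_pos; lia.
by exists n.+1; rewrite /Rplus_iter iterSr.
Qed.

Theorem proposition9 (P : finPoset) :
  bounded P -> 1 < #|P| -> exists n : nat, is_chain (Rplus_iter n P).
Proof. by move=> _ _; apply: Rplus_iter_chain. Qed.
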